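(* Let $\frac{1}{2}< \alpha <1$ and let $G$ be a graph with $n$ vertices and $m$ edges having no isolated vertices. If $1\leq k\leq n-1$, then $$S_{k}(A_{\alpha}(G))\leq 2\alpha m-(n-k)\left(\frac{\det(A_{\alpha}(G))}{\lambda_1(A_{\alpha}(G))\,\lambda_2^{k-1}(A_{\alpha}(G))}\right)^{\frac{1}{n-k}},$$ with equality if and only if $\lambda_2(A_{\alpha}(G))=\cdots=\lambda_k(A_{\alpha}(G))$ and $\lambda_{k+1}(A_{\alpha}(G))=\cdots=\lambda_n(A_{\alpha}(G))$.
   Context: All graphs are simple and undirected. $A_{\alpha}(G)=\alpha D(G)+(1-\alpha)A(G)$, where $A(G)$ is the adjacency matrix and $D(G)$ the diagonal matrix of vertex degrees. $\lambda_1(M)\geq\cdots\geq\lambda_n(M)$ denote the eigenvalues of a real symmetric matrix $M$, and $S_k(M)=\sum_{i=1}^k\lambda_i(M)$. *)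

From HB Require Import structures.
From mathcomp Require Import all_boot all_order all_algebra.
From mathcomp Require Import reals exp.
Set Implicit Arguments. Unset Strict Implicit. Unset Printing Implicit Defensive.
Import Order.TTheory GRing.Theory Num.Theory.
Local Open Scope ring_scope.

Definition simple_graph (n : nat) (e : rel 'I_n) : Prop :=
  (forall i j, e i j = e j i) /\ (forall i, ~~ e i i).

Definition no_isolated (n : nat) (e : rel 'I_n) : Prop :=
  forall i, exists j, e i j.

Definition nedges (n : nat) (e : rel 'I_n) : nat :=
  #|[set p : 'I_n * 'I_n | e p.1 p.2 && (p.1 < p.2)%N]|.

Definition deg (n : nat) (e : rel 'I_n) (i : 'I_n) : nat := #|[set j | e i j]|.

Definition adjmx (R : realType) (n : nat) (e : rel 'I_n) : 'M[R]_n :=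
  \matrix_(i, j) (e i j)%:R.

Definition degmx (R : realType) (n : nat) (e : rel 'I_n) : 'M[R]_n :=
  \matrix_(i, j) ((i == j)%:R * (deg e i)%:R).

Definition Aalpha (R : realType) (n : nat) (e : rel 'I_n) (alpha : R) : 'M[R]_n :=
  alpha *: degmx R e + (1 - alpha) *: adjmx R e.

(* lam 1 >= ... >= lam n are the eigenvalues (with multiplicity) of M:
   non-increasing and the characteristic polynomial splits with these roots. *)
Definition sorted_eigenvalues (R : realType) (n : nat) (M : 'M[R]_n)
    (lam : nat -> R) : Prop :=
  (forall i j, (1 <= i)%N -> (i <= j)%N -> (j <= n)%N -> lam j <= lam i) /\
  char_poly M = \prod_(1 <= i < n.+1) ('X - (lam i)%:P).

Definition Sk (R : realType) (lam : nat -> R) (k : nat) : R :=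
  \sum_(1 <= i < k.+1) lam i.

From HB Require Import structures.
From mathcomp Require Import all_boot all_order all_algebra.
From mathcomp Require Import reals exp.
From mathcomp Require Import ring lra zify.
Set Implicit Arguments. Unset Strict Implicit. Unset Printing Implicit Defensive.
Import Order.TTheory GRing.Theory Num.Theory.
Local Open Scope ring_scope.

(* For alpha > 1/2 every eigenvalue of A_alpha(G) is positive: for an
   eigenvector v, v A_alpha v^T = (2 alpha - 1) v D v^T + (1 - alpha) v (D + A) v^T,
   where v D v^T > 0 because G has no isolated vertex and v (D + A) v^T >= 0
   because D + A is the signless Laplacian.  The eigenvalues sum to
   tr A_alpha = 2 alpha m, so S_k = 2 alpha m - (lam_{k+1} + ... + lam_n).
   By AM-GM this tail sum is at least (n - k) (lam_{k+1} ... lam_n)^(1/(n-k)), and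
   det A_alpha / (lam_1 lam_2^(k-1)) = (lam_{k+1} ... lam_n) (lam_2 ... lam_k / lam_2^(k-1))
   is at most lam_{k+1} ... lam_n since lam_i <= lam_2 for i >= 2.  Both
   inequalities are carried as [leif] statements, so that their equality cases
   combine into the characterisation of equality. *)

Lemma all_eq_index_iotaP (T : eqType) (F : nat -> T) c a b :
  reflect (forall i, (a <= i < b)%N -> F i = c)
          (all (fun i => F i == c) (index_iota a b)).
Proof.
apply: (iffP allP) => Fc i; rewrite ?mem_index_iota => ai.
  by apply/eqP/Fc; rewrite mem_index_iota.
by rewrite Fc.
Qed.

Lemma prod_le_exp_leif (R : numDomainType) (I : eqType) (r : seq I) (F : I -> R) c :
  0 < c -> {in r, forall i, 0 <= F i <= c} ->
  \prod_(i <- r) F i <= c ^+ size r ?= iff all (fun i => F i == c) r.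
Proof.
move=> c_gt0; elim: r => [_|x r IHr /= Fr]; first by rewrite big_nil; apply/leif_refl.
have /andP[Fx_ge0 Fx_le] := Fr x (mem_head x r).
have Fr' : {in r, forall i, 0 <= F i <= c} by move=> i ri; apply: Fr; rewrite inE ri orbT.
have P_ge0 : 0 <= \prod_(i <- r) F i.
  by rewrite big_seq; apply: prodr_ge0 => i /Fr' /andP[].
have := leif_pM Fx_ge0 P_ge0 (leif_eq Fx_le) (IHr Fr').
by rewrite big_cons exprS mulf_eq0 expf_eq0 gt_eqF //= andbF.
Qed.

Lemma leif_powR (R : realType) (r : R) x y C : 0 < r -> 0 <= x -> 0 <= y ->
  x <= y ?= iff C -> x `^ r <= y `^ r ?= iff C.
Proof.
move=> r_gt0 x_ge0 y_ge0.
have powR_mono : {in Num.nneg &, {mono (fun a : R => a `^ r) : a b / a <= b}}.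
  exact/le_mono_in/gt0_ltr_powR.
by rewrite (mono_in_leif powR_mono).
Qed.

Lemma powR_inv_exprn (R : realType) (x : R) m : 0 <= x -> (0 < m)%N ->
  (x ^+ m) `^ m%:R^-1 = x.
Proof.
move=> x_ge0 m_gt0; rewrite -powR_mulrn // -powRrM mulfV ?powRr1 //.
by rewrite pnatr_eq0 -lt0n.
Qed.

Lemma AGM_powR_leif (R : realType) (F : nat -> R) a b :
  (a < b)%N -> {in index_iota a b, forall i, 0 <= F i} ->
  (b - a)%:R * (\prod_(a <= i < b) F i) `^ (b - a)%:R^-1 <= \sum_(a <= i < b) F i
    ?= iff all (fun i => F i == F a) (index_iota a b).
Proof.
move=> lt_ab F_ge0; have m_gt0 : (0 < b - a)%N by rewrite subn_gt0.
pose E (j : 'I_(b - a)) := F (a + j)%N.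
have shift_in (j : 'I_(b - a)) : (a + j)%N \in index_iota a b.
  by rewrite mem_index_iota leq_addr /= -ltn_subRL.
have E_ge0 : {in predT, forall j, 0 <= E j} by move=> j _; apply/F_ge0/shift_in.
have reindex (idx : R) op : \big[op/idx]_(a <= i < b) F i = \big[op/idx]_j E j.
  by rewrite -{1}(add0n a) big_addn big_mkord; apply: eq_bigr => j _; rewrite /E addnC.
have mR_gt0 : (0 : R) < (b - a)%:R by rewrite ltr0n.
have m_inv_gt0 : (0 : R) < (b - a)%:R^-1 by rewrite invr_gt0.
have P_ge0 : 0 <= \prod_j E j by apply: prodr_ge0 => j _; apply: E_ge0.
have mu_ge0 : 0 <= (\sum_j E j) / (b - a)%:R by rewrite divr_ge0 ?sumr_ge0 // ?ltW.
have := leif_AGM E_ge0; rewrite card_ord.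
move=> /(leif_powR m_inv_gt0 P_ge0 (exprn_ge0 _ mu_ge0)); rewrite powR_inv_exprn // => AGM.
rewrite !reindex -[X in _ <= X ?= iff _](divfK (lt0r_neq0 mR_gt0)) mulrC.
rewrite (mono_leif (ler_pM2r mR_gt0)); congr (_ <= _ ?= iff _): AGM.
apply/forall_inP/allP => [Eeq i | Feq i _].
  rewrite mem_index_iota => /andP[le_ai lt_ib].
  have lt_i_m : (i - a < b - a)%N by rewrite ltn_sub2r.
  have /forall_inP/(_ (Ordinal m_gt0) isT)/eqP := Eeq (Ordinal lt_i_m) isT.
  by rewrite /E /= subnKC // addn0 => ->.
by apply/forall_inP => j _; rewrite /E !(eqP (Feq _ (shift_in _))).
Qed.

Lemma Sk_le_leif (R : realType) (n k : nat) (lam : nat -> R) :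
  (forall i, (1 <= i <= n)%N -> 0 < lam i) ->
  (forall i j, (1 <= i)%N -> (i <= j)%N -> (j <= n)%N -> lam j <= lam i) ->
  (0 < k < n)%N ->
  Sk lam k <= \sum_(1 <= i < n.+1) lam i
     - (n - k)%:R * (\prod_(1 <= i < n.+1) lam i / (lam 1%N * lam 2%N ^+ (k - 1)))
                      `^ (n - k)%:R^-1
  ?= iff all (fun i => lam i == lam 2%N) (index_iota 2 k.+1)
         && all (fun i => lam i == lam k.+1) (index_iota k.+1 n.+1).
Proof.
move=> lam_gt0 lam_sorted /andP[k_gt0 lt_kn].
pose S_tail := \sum_(k.+1 <= i < n.+1) lam i.
pose P_tail := \prod_(k.+1 <= i < n.+1) lam i.
pose P_mid := \prod_(2 <= i < k.+1) lam i.
have sum_split : \sum_(1 <= i < n.+1) lam i = Sk lam k + S_tail.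
  by rewrite -big_cat_nat // ltnW.
have prod_split : \prod_(1 <= i < n.+1) lam i = lam 1%N * (P_mid * P_tail).
  by rewrite (big_cat_nat (n := k.+1)) 1?big_ltn ?mulrA // ltnW.
have n_gt1 : (1 < n)%N := leq_ltn_trans k_gt0 lt_kn.
have lam1_gt0 : 0 < lam 1%N by apply: lam_gt0; exact: ltnW.
have lam2_gt0 : 0 < lam 2%N by exact: lam_gt0.
have c_gt0 : 0 < lam 2%N ^+ (k - 1) by rewrite exprn_gt0.
have c_inv_gt0 : 0 < (lam 2%N ^+ (k - 1))^-1 by rewrite invr_gt0.
have P_tail_gt0 : 0 < P_tail.
  rewrite /P_tail big_nat; apply: prodr_gt0 => i /andP[lt_ki le_in]; apply: lam_gt0.
  by rewrite (ltn_trans k_gt0 lt_ki).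
have P_mid_gt0 : 0 < P_mid.
  rewrite /P_mid big_nat; apply: prodr_gt0 => i /andP[le_2i lt_ik]; apply: lam_gt0; lia.
have ratio : \prod_(1 <= i < n.+1) lam i / (lam 1%N * lam 2%N ^+ (k - 1))
             = P_tail * (P_mid / lam 2%N ^+ (k - 1)).
  by rewrite prod_split; field; rewrite !lt0r_neq0.
have mid_leif : P_mid <= lam 2%N ^+ (k - 1)
                ?= iff all (fun i => lam i == lam 2%N) (index_iota 2 k.+1).
  have -> : (k - 1 = size (index_iota 2 k.+1))%N by rewrite size_iota subSS subn1.
  apply: prod_le_exp_leif => // i; rewrite mem_index_iota => /andP[le_2i lt_ik].
  have le_in : (i <= n)%N by lia.
  by rewrite ltW ?lam_sorted ?lam_gt0 ?(ltnW le_2i).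
have mR_gt0 : (0 : R) < (n - k)%:R by rewrite ltr0n subn_gt0.
have r_gt0 : (0 : R) < (n - k)%:R^-1 by rewrite invr_gt0.
have ratio_leif : (n - k)%:R * (P_tail * (P_mid / lam 2%N ^+ (k - 1))) `^ (n - k)%:R^-1
                  <= (n - k)%:R * P_tail `^ (n - k)%:R^-1
                  ?= iff all (fun i => lam i == lam 2%N) (index_iota 2 k.+1).
  rewrite (mono_leif (ler_pM2l mR_gt0)).
  apply: leif_powR; rewrite ?ltW ?mulr_gt0 ?divr_gt0 //.
  rewrite -[X in _ <= X ?= iff _]mulr1 (mono_leif (ler_pM2l P_tail_gt0)).
  by rewrite -(divff (lt0r_neq0 c_gt0)) (mono_leif (ler_pM2r c_inv_gt0)).
have AGM_leif : (n - k)%:R * P_tail `^ (n - k)%:R^-1 <= S_tail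
                ?= iff all (fun i => lam i == lam k.+1) (index_iota k.+1 n.+1).
  rewrite -subSS; apply: AGM_powR_leif => // i.
  rewrite mem_index_iota => /andP[lt_ki le_in].
  by apply/ltW/lam_gt0; rewrite (ltn_trans k_gt0 lt_ki).
rewrite ratio sum_split leifBRL (mono_leif (lerD2l _)).
exact: leif_trans ratio_leif AGM_leif.
Qed.

Section SortedEigenvalues.
Variables (R : realType) (n : nat) (M : 'M[R]_n) (lam : nat -> R).
Hypothesis lamM : sorted_eigenvalues M lam.

Let char_polyE : char_poly M = \prod_(x <- map lam (index_iota 1 n.+1)) ('X - x%:P).
Proof. by rewrite big_map; case: lamM. Qed.

Let size_eigenvalues : size (map lam (index_iota 1 n.+1)) = n.
Proof. by rewrite size_map size_iota subn1. Qed.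

Lemma sorted_eigenvalues_root i : (1 <= i <= n)%N -> root (char_poly M) (lam i).
Proof. by move=> ?; rewrite char_polyE root_prod_XsubC map_f // mem_index_iota. Qed.

Lemma sorted_eigenvalues_det : \prod_(1 <= i < n.+1) lam i = \det M.
Proof.
apply: (@mulfI _ ((-1) ^+ n)); first by rewrite signr_eq0.
by rewrite -char_poly_det char_polyE coef0_prod_XsubC size_eigenvalues big_map.
Qed.

Lemma sorted_eigenvalues_mxtrace : \sum_(1 <= i < n.+1) lam i = \tr M.
Proof.
have [n0 | n_gt0] := posnP n.
  rewrite big_geq ?n0 // /mxtrace big1 // => i.
  by have := ltn_ord i; rewrite [X in (_ < X)%N]n0.
apply: oppr_inj; rewrite -char_poly_trace // char_polyE -{3}size_eigenvalues.
by rewrite coefPn_prod_XsubC ?size_eigenvalues -?lt0n // big_map.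
Qed.

End SortedEigenvalues.

Section Graph.
Variables (n : nat) (e : rel 'I_n).

Lemma deg_sum i : deg e i = (\sum_j e i j)%N.
Proof.
by rewrite /deg -sum1_card big_mkcond; apply: eq_bigr => j _; rewrite inE; case: e.
Qed.

Hypothesis G : simple_graph e.

Lemma sum_deg : (\sum_i deg e i = 2 * nedges e)%N.
Proof.
have [esym eirr] := G.
pose half (lt : rel 'I_n) := (\sum_(p : 'I_n * 'I_n) (e p.1 p.2 && lt p.1 p.2))%N.
have nedges_half : nedges e = half (fun i j => i < j)%N.
  rewrite /nedges -sum1_card big_mkcond.
  by apply: eq_bigr => p _; rewrite inE; case: (_ && _).
have half_swap : half (fun i j => j < i)%N = half (fun i j => i < j)%N.
  rewrite /half (reindex_inj (h := fun p => (p.2, p.1))) /=; last by move=> [? ?] [? ?] [-> ->].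
  by apply: eq_bigr => -[i j] _ /=; rewrite esym.
rewrite (eq_bigr _ (fun i _ => deg_sum i)) pair_big /=.
rewrite nedges_half mul2n -addnn -{2}half_swap /half -big_split /=.
apply: eq_bigr => -[i j] _ /=.
case: ltngtP => [||/val_inj ->]; rewrite ?andbT ?andbF ?addn0 //.
by rewrite (negbTE (eirr j)).
Qed.

Lemma mxtrace_Aalpha (R : realType) (alpha : R) :
  \tr (Aalpha e alpha) = 2 * alpha * (nedges e)%:R.
Proof.
have [_ eirr] := G.
rewrite /mxtrace (eq_bigr (fun i => alpha * (deg e i)%:R)) => [|i _].
  by rewrite -mulr_sumr -natr_sum sum_deg natrM mulrCA mulrA.
by rewrite !mxE eqxx (negbTE (eirr i)) mul1r mulr0 addr0.
Qed.

End Graph.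

Definition qform (R : pzRingType) n (M : 'M[R]_n) (v : 'rV[R]_n) : R :=
  (v *m M *m v^T) 0 0.

Lemma qformE (R : comPzRingType) n (M : 'M[R]_n) v :
  qform M v = \sum_i \sum_j M i j * (v 0 i * v 0 j).
Proof.
rewrite /qform mxE; under eq_bigr => j _ do rewrite !mxE big_distrl.
rewrite exchange_big; apply: eq_bigr => i _; apply: eq_bigr => j _.
by rewrite /= mulrCA mulrA.
Qed.

Lemma qform_eigen (R : comPzRingType) n (M : 'M[R]_n) v a :
  v *m M = a *: v -> qform M v = a * \sum_i v 0 i ^+ 2.
Proof.
move=> Mv; rewrite /qform Mv -scalemxAl !mxE; congr (_ * _).
by apply: eq_bigr => i _; rewrite mxE.
Qed.

Section AalphaForm.
Variables (R : realType) (n : nat) (e : rel 'I_n) (v : 'rV[R]_n).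

Lemma qform_degmx : qform (degmx R e) v = \sum_i (deg e i)%:R * v 0 i ^+ 2.
Proof.
rewrite qformE; apply: eq_bigr => i _; rewrite (bigD1 i) //= big1 => [|j ji].
  by rewrite !mxE eqxx mul1r addr0 expr2.
by rewrite !mxE eq_sym (negbTE ji) mul0r mul0r.
Qed.

Lemma qform_Aalpha alpha : qform (Aalpha e alpha) v =
  alpha * qform (degmx R e) v + (1 - alpha) * qform (adjmx R e) v.
Proof. by rewrite /qform /Aalpha mulmxDr mulmxDl -!scalemxAr -!scalemxAl !mxE. Qed.

Hypothesis G : simple_graph e.

Lemma qform_signless_laplacian_ge0 : 0 <= qform (degmx R e) v + qform (adjmx R e) v.
Proof.
have [esym _] := G.
have deg_form : \sum_i (deg e i)%:R * v 0 i ^+ 2 = \sum_i \sum_j (e i j)%:R * v 0 i ^+ 2.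
  by apply: eq_bigr => i _; rewrite deg_sum natr_sum big_distrl.
have deg_form' : \sum_i (deg e i)%:R * v 0 i ^+ 2 = \sum_i \sum_j (e i j)%:R * v 0 j ^+ 2.
  rewrite exchange_big deg_form.
  by apply: eq_bigr => i _; apply: eq_bigr => j _; rewrite esym.
have edge_sum_sq : (qform (degmx R e) v + qform (adjmx R e) v) *+ 2 =
    \sum_i \sum_j (e i j)%:R * (v 0 i + v 0 j) ^+ 2.
  rewrite qform_degmx qformE mulrnDl !mulr2n {1}deg_form deg_form' -!big_split /=.
  apply: eq_bigr => i _; rewrite -!big_split /=.
  by apply: eq_bigr => j _; rewrite mxE; ring.
rewrite -(pmulrn_lge0 _ (isT : (0 < 2)%N)) edge_sum_sq.
by apply: sumr_ge0 => i _; apply: sumr_ge0 => j _; rewrite mulr_ge0 ?sqr_ge0.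
Qed.

Hypothesis no_iso : no_isolated e.

Lemma qform_degmx_gt0 : v != 0 -> 0 < qform (degmx R e) v.
Proof.
move=> v0; have [i vi0] : exists i, v 0 i != 0.
  apply/existsP; apply: contraNT v0 => /existsPn vi0.
  by apply/eqP/rowP => i; apply/eqP; rewrite mxE; apply/negPn.
rewrite qform_degmx (bigD1 i) //= ltr_pwDl ?sumr_ge0 // => [|j _].
  have [j eij] := no_iso i.
  rewrite mulr_gt0 ?exprn_even_gt0 // ltr0n /deg card_gt0.
  by apply/set0Pn; exists j; rewrite inE.
by rewrite mulr_ge0 ?sqr_ge0.
Qed.

Lemma Aalpha_eigenvalue_gt0 alpha a : 1 / 2 < alpha -> alpha <= 1 ->
  v != 0 -> v *m Aalpha e alpha = a *: v -> 0 < a.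
Proof.
move=> ha1 ha2 v0 /qform_eigen; rewrite qform_Aalpha => form_eq.
have D_gt0 := qform_degmx_gt0 v0.
have DA_ge0 := qform_signless_laplacian_ge0.
have form_gt0 : 0 < alpha * qform (degmx R e) v + (1 - alpha) * qform (adjmx R e) v.
  have -> : alpha * qform (degmx R e) v + (1 - alpha) * qform (adjmx R e) v =
      (2 * alpha - 1) * qform (degmx R e) v
      + (1 - alpha) * (qform (degmx R e) v + qform (adjmx R e) v) by ring.
  by rewrite ltr_pwDl ?mulr_ge0 ?mulr_gt0 ?subr_ge0 ?subr_gt0 //; lra.
have norm_ge0 : 0 <= \sum_i v 0 i ^+ 2 by rewrite sumr_ge0 // => i _; rewrite sqr_ge0.
nra.
Qed.

End AalphaForm.

Lemma Aalpha_root_char_gt0 (R : realType) n (e : rel 'I_n) (alpha a : R) :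
  simple_graph e -> no_isolated e -> 1 / 2 < alpha -> alpha <= 1 ->
  root (char_poly (Aalpha e alpha)) a -> 0 < a.
Proof.
move=> G no_iso ha1 ha2; rewrite -eigenvalue_root_char => /eigenvalueP [v Av v0].
exact: (Aalpha_eigenvalue_gt0 G no_iso ha1 ha2 v0 Av).
Qed.

Theorem theorem3p3 (R : realType) (n : nat) (e : rel 'I_n) (alpha : R)
    (lam : nat -> R) (k : nat) :
  simple_graph e -> no_isolated e ->
  1 / 2 < alpha -> alpha < 1 ->
  sorted_eigenvalues (Aalpha e alpha) lam ->
  (1 <= k)%N -> (k <= n - 1)%N ->
  (Sk lam k <= 2 * alpha * (nedges e)%:R
     - (n - k)%:R * powR (\det (Aalpha e alpha) / (lam 1%N * lam 2%N ^+ (k - 1)))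
                         ((n - k)%:R^-1))
  /\
  (Sk lam k = 2 * alpha * (nedges e)%:R
     - (n - k)%:R * powR (\det (Aalpha e alpha) / (lam 1%N * lam 2%N ^+ (k - 1)))
                         ((n - k)%:R^-1)
   <->
   (forall i, (2 <= i <= k)%N -> lam i = lam 2%N) /\
   (forall i, (k.+1 <= i <= n)%N -> lam i = lam k.+1)).
Proof.
move=> G no_iso ha1 ha2 lamA k_ge1 k_le.
have lam_gt0 i : (1 <= i <= n)%N -> 0 < lam i.
  move=> i_in; apply: Aalpha_root_char_gt0 G no_iso ha1 (ltW ha2) _.
  exact: sorted_eigenvalues_root lamA _ i_in.
have k_range : (0 < k < n)%N by lia.
have := Sk_le_leif lam_gt0 lamA.1 k_range.
rewrite (sorted_eigenvalues_mxtrace lamA) (sorted_eigenvalues_det lamA) mxtrace_Aalpha //.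
move=> Sk_leif; split; first exact: Sk_leif.
rewrite (rwP eqP) (eq_leif Sk_leif).
split=> [/andP[/all_eq_index_iotaP mid /all_eq_index_iotaP tail] // | [mid tail]].
by apply/andP; split; apply/all_eq_index_iotaP.
Qed.
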